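(* Let $K\ge 1$ and $N>K$ be integers and $\mu>0$. Consider $K$ files $f_1,\dots,f_K$ stored on $N$ nodes using a systematic $(N,K)$ MDS code, each node having service rate $\mu$. Then every vector $(\lambda_1,\dots,\lambda_K)$ in the service capacity region of this system satisfies $$\sum_{i=1}^{K}\Big(\min(\lambda_i,\mu)+K(\lambda_i-\mu)^{+}\Big)\le N\mu,$$ where $(x)^+=\max(0,x)$.
   Context: Storage model: there are $K$ files $f_1,\dots,f_K$ of equal size stored on $N$ nodes labeled $1,\dots,N$, each node having service rate $\mu$. In the systematic $(N,K)$ MDS code, node $i$ stores $f_i$ for $1\le i\le K$, and nodes $K+1,\dots,N$ store parity symbols, such that file $f_i$ can be recovered either from node $i$ alone or from any $K$ of the other $N-1$ nodes. Accordingly, the recovering sets of $f_i$ are $\{i\}$ together with every $K$-element subset of $\{1,\dots,N\}\setminus\{i\}$; denote them $R^{(i)}_1,\dots,R^{(i)}_{t_i}$. Requests for $f_i$ arrive at rate $\lambda_i\ge 0$. The service capacity region is the set of vectors $(\lambda_1,\dots,\lambda_K)$ for which there exist numbers $\lambda^{(i)}_j\ge 0$ ($1\le i\le K$, $1\le j\le t_i$; the rate of requests for $f_i$ assigned to recovering set $R^{(i)}_j$) with $\sum_{j=1}^{t_i}\lambda^{(i)}_j=\lambda_i$ for every $i$, and $\sum_{i=1}^K\sum_{j:\,\ell\in R^{(i)}_j}\lambda^{(i)}_j\le\mu$ for every node $\ell\in\{1,\dots,N\}$. *)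

From HB Require Import structures.
From mathcomp Require Import all_boot all_order all_algebra.
Set Implicit Arguments. Unset Strict Implicit. Unset Printing Implicit Defensive.
Import Order.TTheory GRing.Theory Num.Theory.
Local Open Scope ring_scope.

(* Nodes are 'I_N (node j+1 of the paper = ordinal j), files are 'I_K.
   In the systematic code, file i (ordinal i) is stored on node
   sys_node hKN i = ordinal i (seen in 'I_N). *)
Definition sys_node (K N : nat) (hKN : (K <= N)%N) (i : 'I_K) : 'I_N :=
  widen_ord hKN i.

Definition recovering_set (K N : nat) (hKN : (K <= N)%N) (i : 'I_K)
    (S : {set 'I_N}) : bool :=
  (S == [set sys_node hKN i]) || ((#|S| == K) && (sys_node hKN i \notin S)).

Definition in_capacity_region (R : realFieldType) (K N : nat)
    (hKN : (K <= N)%N) (mu : R) (lambda : 'I_K -> R) : Prop :=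
  exists lam : 'I_K -> {set 'I_N} -> R,
    [/\ (forall i S, 0 <= lam i S),
        (forall i S, ~~ recovering_set hKN i S -> lam i S = 0),
        (forall i, \sum_(S : {set 'I_N} | recovering_set hKN i S) lam i S
                   = lambda i)
      & (forall l : 'I_N,
           \sum_(i < K) \sum_(S : {set 'I_N} | recovering_set hKN i S && (l \in S))
              lam i S <= mu)].

Definition posp (R : realDomainType) (x : R) : R := Num.max 0 x.

From HB Require Import structures.
From mathcomp Require Import all_boot all_order all_algebra.
From mathcomp Require Import lra.
Set Implicit Arguments. Unset Strict Implicit. Unset Printing Implicit Defensive.
Import Order.TTheory GRing.Theory Num.Theory.
Local Open Scope ring_scope.

(* Split the rate of each file f_i into the part a_i served by its
   systematic node and the part b_i served by K-subsets of the other nodes.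
   A request served by a K-subset loads K nodes, so double counting the node
   loads gives sum_i (a_i + K b_i) <= N mu.  Since a_i alone loads the
   systematic node of f_i, a_i <= mu, and then
   min(a_i + b_i, mu) + K (a_i + b_i - mu)^+ <= a_i + K b_i. *)

Lemma sum_mem_exchange (T : finType) (V : zmodType) (P : pred {set T})
    (f : {set T} -> V) :
  \sum_(x : T) \sum_(S : {set T} | P S && (x \in S)) f S
  = \sum_(S : {set T} | P S) f S *+ #|S|.
Proof.
under eq_bigr => x _ do rewrite big_mkcondr /=.
rewrite exchange_big /=; apply: eq_bigr => S _.
by rewrite -big_mkcond /= sumr_const.
Qed.

Lemma min_add_posp_le (R : realFieldType) (k mu a b : R) :
  1 <= k -> 0 <= a <= mu -> 0 <= b ->
  Num.min (a + b) mu + k * posp (a + b - mu) <= a + k * b.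
Proof.
move=> k_ge1 /andP[a_ge0 a_le_mu] b_ge0; rewrite /posp.
have [ab_le_mu | mu_lt_ab] := leP (a + b) mu.
  by rewrite max_l ?subr_le0 // mulr0 addr0 lerD2l -{1}(mul1r b) ler_wpM2r.
rewrite max_r; last by rewrite subr_ge0 ltW.
(* mu + k (a + b - mu) = a + k b - (k - 1) (mu - a) *)
have : 0 <= (k - 1) * (mu - a) by rewrite mulr_ge0 // subr_ge0.
nra.
Qed.

Section CapacityRegion.

Variables (R : realFieldType) (K N : nat) (hKN : (K <= N)%N) (mu : R).
Variable lam : 'I_K -> {set 'I_N} -> R.
Hypothesis lam_ge0 : forall i S, 0 <= lam i S.
Hypothesis node_load_le : forall l : 'I_N,
  \sum_(i < K) \sum_(S : {set 'I_N} | recovering_set hKN i S && (l \in S))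
     lam i S <= mu.

Local Notation rec := (recovering_set hKN).
Local Notation sys_set i := [set sys_node hKN i].

Definition parity_rate (i : 'I_K) : R :=
  \sum_(S : {set 'I_N} | rec i S && (S != sys_set i)) lam i S.

Lemma recovering_sys_set i : rec i (sys_set i).
Proof. by rewrite /recovering_set eqxx. Qed.

Lemma parity_rate_ge0 i : 0 <= parity_rate i.
Proof. by apply: sumr_ge0 => *; apply: lam_ge0. Qed.

Lemma file_rate_split i :
  \sum_(S : {set 'I_N} | rec i S) lam i S = lam i (sys_set i) + parity_rate i.
Proof. by rewrite (bigD1 (sys_set i)) ?recovering_sys_set. Qed.

Lemma card_recovering_set i S :
  rec i S -> S != sys_set i -> #|S| = K.
Proof. by case/orP => [/eqP -> | /andP[/eqP -> _]]; rewrite ?eqxx. Qed.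

Lemma sys_rate_le i : lam i (sys_set i) <= mu.
Proof.
apply: le_trans (node_load_le (sys_node hKN i)).
rewrite (bigD1 i) //= (bigD1 (sys_set i)) ?recovering_sys_set ?set11 //=.
rewrite -addrA lerDl addr_ge0 //; apply: sumr_ge0 => *.
  exact: lam_ge0.
by apply: sumr_ge0 => *; apply: lam_ge0.
Qed.

Lemma file_load i :
  \sum_(S : {set 'I_N} | rec i S) lam i S *+ #|S|
  = lam i (sys_set i) + K%:R * parity_rate i.
Proof.
rewrite (bigD1 (sys_set i)) ?recovering_sys_set //= cards1 mulr_sumr.
congr (_ + _); apply: eq_bigr => S /andP[recS not_sys].
by rewrite (card_recovering_set recS not_sys) mulr_natl.
Qed.

Lemma total_load_le :
  \sum_(i < K) (lam i (sys_set i) + K%:R * parity_rate i) <= N%:R * mu.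
Proof.
under eq_bigr => i _ do rewrite -file_load -sum_mem_exchange.
rewrite exchange_big /=.
apply: le_trans (ler_sum _ (fun l _ => node_load_le l)) _.
by rewrite sumr_const card_ord mulr_natl.
Qed.

End CapacityRegion.

Theorem theorem1 (R : realFieldType) (K N : nat) (hK : (1 <= K)%N)
    (hKN : (K < N)%N) (mu : R) (hmu : 0 < mu) (lambda : 'I_K -> R) :
  (forall i, 0 <= lambda i) ->
  in_capacity_region (ltnW hKN) mu lambda ->
  \sum_(i < K) (Num.min (lambda i) mu + K%:R * posp (lambda i - mu))
    <= N%:R * mu.
Proof.
move=> _ [lam [lam_ge0 _ lam_sum node_load_le]].
apply: le_trans (total_load_le node_load_le); apply: ler_sum => i _.
rewrite -lam_sum file_rate_split.
apply: min_add_posp_le.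
- by rewrite ler1n.
- by rewrite lam_ge0 (sys_rate_le lam_ge0 node_load_le).
- exact: parity_rate_ge0.
Qed.
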